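(* Let $R$ be a commutative ring and let $(A,d)$ be a left dg-semiprimary differential graded $R$-algebra. Then: (1) every dg-simple left dg-module $(S,\delta)$ over $(A,d)$ is acyclic; (2) for every dg-maximal left dg-ideal $M$ of $(A,d)$, the inclusion induces an isomorphism $H(M,d)\cong H(A,d)$; (3) if the dg-ideal $(\mathrm{dgrad}_2(A),d)$ is acyclic, then $(A,d)$ is acyclic.
   Context: A differential graded (dg) $R$-algebra $(A,d)$ is a $\mathbb{Z}$-graded $R$-algebra $A$ with an $R$-linear degree-$1$ endomorphism $d$, $d^2=0$, $d(ab)=d(a)b+(-1)^{|a|}a\,d(b)$ for homogeneous $a,b$. A left dg-module $(M,\delta)$ is a graded left $A$-module with a degree-$1$ map $\delta$, $\delta^2=0$, $\delta(am)=d(a)m+(-1)^{|a|}a\,\delta(m)$; dg-submodules are graded submodules stable under $\delta$; $(S,\delta)$ is dg-simple if $S\ne0$ and its only dg-submodules are $0,S$. A left dg-ideal is a dg-submodule of $A$; it is dg-maximal if it is a proper left dg-ideal maximal among proper left dg-ideals. An object is acyclic if its homology $\ker/\operatorname{im}$ vanishes. The dg-radical is $\mathrm{dgrad}_2(A)=\bigcap_{(S,\delta)}\operatorname{ann}(S,\delta)$, the intersection over all dg-simple left dg-modules of their left annihilators in $A$; it is a two-sided dg-ideal. $(A,d)$ is left dg-semiprimary if (i) the dg-algebra $(A/\mathrm{dgrad}_2(A),\bar d)$ is semisimple in the categorical sense, i.e. every short exact sequence of left dg-modules over it splits, and (ii) every homogeneous idempotent of $A/\mathrm{dgrad}_2(A)$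 is the image of a homogeneous idempotent of $A$ under the natural map. *)

From HB Require Import structures.
From mathcomp Require Import all_boot all_order all_algebra.
Set Implicit Arguments. Unset Strict Implicit. Unset Printing Implicit Defensive.
Import Order.TTheory GRing.Theory Num.Theory.
Local Open Scope ring_scope.

(* Conventions: subsets ("predicates") are Prop-valued, [V -> Prop].
   A Z-grading of an additive group V is a family [P : int -> V -> Prop]
   of homogeneous components. *)

Definition ksign (A : pzRingType) (n : int) : A := (-1) ^+ `|n|%N.

(* V is the internal direct sum of the subgroups P n (n : int). *)
Definition graded_decomposition (V : zmodType) (P : int -> V -> Prop) : Prop :=
  (forall n, P n 0) /\
  (forall n x y, P n x -> P n y -> P n (x + y)) /\
  (forall n x, P n x -> P n (- x)) /\
  (forall x : V, exists (s : seq int) (f : int -> V),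
      (forall n, P n (f n)) /\ x = \sum_(n <- s) f n) /\
  (forall (s : seq int) (f : int -> V), uniq s -> (forall n, P n (f n)) ->
      \sum_(n <- s) f n = 0 -> forall n, n \in s -> f n = 0).

Section DG.
Variables (R : comPzRingType) (A : algType R).

Definition is_dg_algebra (gr : int -> A -> Prop) (d : A -> A) : Prop :=
  graded_decomposition gr /\
  (forall n (r : R) a, gr n a -> gr n (r *: a)) /\
  gr 0 1 /\
  (forall i j a b, gr i a -> gr j b -> gr (i + j) (a * b)) /\
  (forall a b, d (a + b) = d a + d b) /\
  (forall (r : R) a, d (r *: a) = r *: d a) /\
  (forall n a, gr n a -> gr (n + 1) (d a)) /\
  (forall a, d (d a) = 0) /\
  (forall n a b, gr n a -> d (a * b) = d a * b + ksign A n * a * d b).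

Definition is_dg_module (gr : int -> A -> Prop) (d : A -> A)
    (M : lmodType A) (grM : int -> M -> Prop) (delta : M -> M) : Prop :=
  graded_decomposition grM /\
  (forall n (r : R) m, grM n m -> grM n ((r%:A : A) *: m)) /\
  (forall i j (a : A) (m : M), gr i a -> grM j m -> grM (i + j) (a *: m)) /\
  (forall m1 m2, delta (m1 + m2) = delta m1 + delta m2) /\
  (forall n m, grM n m -> grM (n + 1) (delta m)) /\
  (forall m, delta (delta m) = 0) /\
  (forall n (a : A) (m : M), gr n a ->
      delta (a *: m) = d a *: m + ksign A n *: (a *: delta m)).

Definition is_dg_submodule (M : lmodType A) (grM : int -> M -> Prop)
    (delta : M -> M) (N : M -> Prop) : Prop :=
  N 0 /\
  (forall x y, N x -> N y -> N (x + y)) /\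
  (forall (a : A) x, N x -> N (a *: x)) /\
  (forall x, N x -> exists (s : seq int) (f : int -> M),
      (forall n, grM n (f n) /\ N (f n)) /\ x = \sum_(n <- s) f n) /\
  (forall x, N x -> N (delta x)).

Definition dg_simple (M : lmodType A) (grM : int -> M -> Prop)
    (delta : M -> M) : Prop :=
  (exists m : M, m <> 0) /\
  forall N : M -> Prop, is_dg_submodule grM delta N ->
    (forall m, N m -> m = 0) \/ (forall m, N m).

Definition is_left_dg_ideal (gr : int -> A -> Prop) (d : A -> A)
    (I : A -> Prop) : Prop :=
  @is_dg_submodule A^o gr d I.

Definition is_dg_maximal (gr : int -> A -> Prop) (d : A -> A)
    (I : A -> Prop) : Prop :=
  is_left_dg_ideal gr d I /\ (exists a, ~ I a) /\
  forall J : A -> Prop, is_left_dg_ideal gr d J -> (exists a, ~ J a) ->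
    (forall a, I a -> J a) -> forall a, J a -> I a.

Definition dgrad2 (gr : int -> A -> Prop) (d : A -> A) (x : A) : Prop :=
  forall (S : lmodType A) (grS : int -> S -> Prop) (delta : S -> S),
    is_dg_module gr d grS delta -> dg_simple grS delta ->
    forall s : S, x *: s = 0.

Definition acyclic_on (V : zmodType) (N : V -> Prop) (delta : V -> V) : Prop :=
  forall x, N x -> delta x = 0 -> exists y, N y /\ x = delta y.

Definition acyclic (V : zmodType) (delta : V -> V) : Prop :=
  acyclic_on (fun _ => True) delta.

Definition is_dg_morphism (gr : int -> A -> Prop) (d : A -> A)
    (M1 M2 : lmodType A) (gr1 : int -> M1 -> Prop) (delta1 : M1 -> M1)
    (gr2 : int -> M2 -> Prop) (delta2 : M2 -> M2) (f : M1 -> M2) : Prop :=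
  (forall x y, f (x + y) = f x + f y) /\
  (forall (a : A) x, f (a *: x) = a *: f x) /\
  (forall n x, gr1 n x -> gr2 n (f x)) /\
  (forall x, f (delta1 x) = delta2 (f x)).

(* A left dg-module over A/I (I a two-sided dg-ideal) is the same thing as
   a left dg-module over A annihilated by I.  The quotient (A/I, d) is
   semisimple iff every short exact sequence of such dg-modules splits. *)
Definition quotient_dg_semisimple (gr : int -> A -> Prop) (d : A -> A)
    (I : A -> Prop) : Prop :=
  forall (M1 M2 M3 : lmodType A)
    (gr1 : int -> M1 -> Prop) (delta1 : M1 -> M1)
    (gr2 : int -> M2 -> Prop) (delta2 : M2 -> M2)
    (gr3 : int -> M3 -> Prop) (delta3 : M3 -> M3)
    (f : M1 -> M2) (g : M2 -> M3),
    is_dg_module gr d gr1 delta1 -> is_dg_module gr d gr2 delta2 ->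
    is_dg_module gr d gr3 delta3 ->
    (forall x, I x -> forall m : M1, x *: m = 0) ->
    (forall x, I x -> forall m : M2, x *: m = 0) ->
    (forall x, I x -> forall m : M3, x *: m = 0) ->
    is_dg_morphism gr d gr1 delta1 gr2 delta2 f ->
    is_dg_morphism gr d gr2 delta2 gr3 delta3 g ->
    injective f -> (forall z, exists y, g y = z) ->
    (forall y, g y = 0 <-> exists x, y = f x) ->
    exists s : M3 -> M2,
      is_dg_morphism gr d gr3 delta3 gr2 delta2 s /\ (forall z, g (s z) = z).

(* Homogeneous idempotents of A/I lift to homogeneous idempotents of A.
   A homogeneous element of A/I of degree n is the class of some x in A_n;
   it is idempotent iff x*x - x lies in I. *)
Definition lift_hom_idempotents (gr : int -> A -> Prop) (I : A -> Prop) : Prop :=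
  forall n x, gr n x -> I (x * x - x) ->
    exists m e, gr m e /\ e * e = e /\ I (e - x).

Definition left_dg_semiprimary (gr : int -> A -> Prop) (d : A -> A) : Prop :=
  quotient_dg_semisimple gr d (dgrad2 gr d) /\
  lift_hom_idempotents gr (dgrad2 gr d).

End DG.

(* Let J = dgrad_2(A).  Semisimplicity of A/J forces every dg-module N
   annihilated by J to be acyclic: the sequence 0 -> N[1] -> cone(id_N) -> N -> 0
   splits, and a dg-splitting of it is a contracting homotopy of N.  Dg-simple
   modules are annihilated by J, whence (1).  If P is a dg-submodule of N with
   J N <= P, acyclicity of N/P says that every x with dx in P is a boundary
   modulo P.  Applied to a dg-maximal left ideal M, which contains J because
   A/M is dg-simple, this gives H(M) = H(A), i.e. (2); applied to P = J it lifts
   acyclicity from J to A, i.e. (3). *)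

From HB Require Import structures.
From mathcomp Require Import all_boot all_order all_algebra.
From mathcomp Require Import zify.
From Stdlib Require Import ClassicalEpsilon FunctionalExtensionality.
From Stdlib Require Import PropExtensionality Classical.
Import GRing.Theory.
Local Open Scope ring_scope.
Set Implicit Arguments. Unset Strict Implicit. Unset Printing Implicit Defensive.

(** * Graded decompositions and the parity involution *)

Lemma big_support (I : eqType) (V : nmodType) (s t : seq I) (f : I -> V) :
  uniq s -> uniq t -> {subset s <= t} -> (forall i, i \notin s -> f i = 0) ->
  \sum_(i <- t) f i = \sum_(i <- s) f i.
Proof.
move=> us ut st f0.
rewrite (bigID (mem s)) /= [X in _ + X]big1 ?addr0; last by move=> i /f0.
rewrite -big_filter; apply: perm_big; apply: uniq_perm; rewrite ?filter_uniq //.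
by move=> i; rewrite mem_filter andb_idr //; apply: st.
Qed.

Definition ksignv (V : zmodType) (n : int) (v : V) : V := if odd `|n|%N then - v else v.

Section KoszulSign.
Variable V : zmodType.
Implicit Types (n : int) (v w : V).

Lemma ksignvD n v w : ksignv n (v + w) = ksignv n v + ksignv n w.
Proof. by rewrite /ksignv; case: (odd _); rewrite ?opprD. Qed.

Lemma ksignv0 n : ksignv n (0 : V) = 0.
Proof. by rewrite /ksignv; case: (odd _); rewrite ?oppr0. Qed.

Lemma ksignvK n : involutive (@ksignv V n).
Proof. by move=> v; rewrite /ksignv; case: (odd _); rewrite ?opprK. Qed.

Lemma ksignvS n v : ksignv (n + 1) v = - ksignv n v.
Proof.
rewrite /ksignv; have -> : odd `|(n + 1)%R|%N = ~~ odd `|n|%N by lia.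
by case: (odd _); rewrite ?opprK.
Qed.

Lemma ksignv_add m n v : ksignv (m + n) v = ksignv m (ksignv n v).
Proof.
rewrite /ksignv; have -> : odd `|(m + n)%R|%N = odd `|m|%N (+) odd `|n|%N by lia.
by case: (odd `|m|%N); case: (odd `|n|%N); rewrite ?opprK.
Qed.

End KoszulSign.

Lemma ksignE (A : pzRingType) (M : lmodType A) n (m : M) : ksign A n *: m = ksignv n m.
Proof. by rewrite /ksign -signr_odd scaler_sign. Qed.

Definition is_decomp (V : zmodType) (P : int -> V -> Prop) (x : V) (s : seq int)
    (f : int -> V) :=
  [/\ uniq s, forall n, P n (f n), forall n, n \notin s -> f n = 0
     & x = \sum_(n <- s) f n].

Lemma decomp_widen (V : zmodType) (P : int -> V -> Prop) x s f t :
  is_decomp P x s f -> uniq t -> {subset s <= t} -> is_decomp P x t f.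
Proof.
move=> [us Pf f0 ->] ut st; split=> //; last by rewrite (big_support us ut st f0).
by move=> n /(contra (st n)) /f0.
Qed.

Lemma decomp_cover (V W : zmodType) (P : int -> V -> Prop) (Q : int -> W -> Prop)
    x s f y t g : is_decomp P x s f -> is_decomp Q y t g ->
  is_decomp P x (undup (s ++ t)) f /\ is_decomp Q y (undup (s ++ t)) g.
Proof.
move=> Dx Dy; split; [apply: (decomp_widen Dx) | apply: (decomp_widen Dy)];
  by rewrite ?undup_uniq // => k k_in; rewrite mem_undup mem_cat k_in ?orbT.
Qed.

Section Decompositions.
Variables (V : zmodType) (P : int -> V -> Prop).
Hypothesis HP : graded_decomposition P.

Let P0 : forall n, P n 0. Proof. by case: HP. Qed.
Let PD : forall n x y, P n x -> P n y -> P n (x + y). Proof. by case: HP => _ []. Qed.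
Let PN : forall n x, P n x -> P n (- x). Proof. by case: HP => _ [_ []]. Qed.

Lemma decomp_collect (Q : V -> Prop) : Q 0 -> (forall x y, Q x -> Q y -> Q (x + y)) ->
  forall l : seq (int * V), (forall p, p \in l -> P p.1 p.2 /\ Q p.2) ->
  exists s f, [/\ uniq s, forall n, P n (f n) /\ Q (f n),
     forall n, n \notin s -> f n = 0 & \sum_(p <- l) p.2 = \sum_(n <- s) f n].
Proof.
move=> Q0 QD; elim=> [|[n v] l IH] Hl.
  by exists [::], (fun _ => 0); split => //; rewrite !big_nil.
have [|s [f [us Pf f0 E]]] := IH.
  by move=> p pl; apply: Hl; rewrite in_cons pl orbT.
have [Pv Qv] := Hl (n, v) (mem_head _ _); rewrite big_cons E /=.
case ns: (n \in s).
  exists s, (fun k => if k == n then v + f n else f k); split => //.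
  - move=> k; case: eqP => [->|_]; last exact: Pf.
    by have [? ?] := Pf n; split; [apply: PD|apply: QD].
  - by move=> k ks; case: eqP => [kn|_]; [rewrite kn ns in ks|apply: f0].
  rewrite (bigD1_seq n) //= (bigD1_seq n ns us) /= eqxx addrA; congr (_ + _).
  by apply: eq_bigr => k /negbTE ->.
exists (n :: s), (fun k => if k == n then v else f k); split => /=.
- by rewrite ns.
- by move=> k; case: eqP => [->|_]; [split|apply: Pf].
- by move=> k; rewrite in_cons negb_or => /andP [/negbTE -> /f0].
rewrite big_cons eqxx; congr (_ + _); rewrite big_seq_cond [RHS]big_seq_cond.
by apply: eq_bigr => k /andP [ks _]; case: eqP => // kn; rewrite kn ns in ks.
Qed.

Lemma decomp_exists x : exists s f, is_decomp P x s f.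
Proof.
have [_ [_ [_ [/(_ x) [s [f [Pf ->]]] _]]]] := HP.
have [|t [g [ut Pg g0 E]]] := @decomp_collect (fun _ => True) I (fun _ _ _ _ => I)
   [seq (n, f n) | n <- s]; first by move=> p /mapP [n _ ->].
by exists t, g; split => // [n|]; [case: (Pg n)|rewrite -E big_map].
Qed.

Lemma decompD x y s f g : is_decomp P x s f -> is_decomp P y s g ->
  is_decomp P (x + y) s (fun n => f n + g n).
Proof.
move=> [us Pf f0 ->] [_ Pg g0 ->]; split=> // [n|n ns|]; first exact: PD.
  by rewrite f0 ?g0 ?addr0.
by rewrite big_split.
Qed.

Lemma decompN x s f : is_decomp P x s f -> is_decomp P (- x) s (fun n => - f n).
Proof.
move=> [us Pf f0 ->]; split => // [n|n /f0 ->|]; rewrite ?oppr0 ?sumrN //.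
exact: PN.
Qed.

Lemma decomp0 s f : is_decomp P 0 s f -> f =1 (fun=> 0).
Proof.
move=> [us Pf f0 E] n; have [_ [_ [_ [_ uniqP]]]] := HP.
by have [/(uniqP s f us Pf (esym E))|/f0] := boolP (n \in s).
Qed.

Lemma decomp_unique x s f t g : is_decomp P x s f -> is_decomp P x t g -> f =1 g.
Proof.
move=> Dxf Dxg n; have [Dxf' Dxg'] := decomp_cover Dxf Dxg.
have := decompD Dxf' (decompN Dxg'); rewrite subrr => /decomp0/(_ n).
by move/eqP; rewrite subr_eq0 => /eqP.
Qed.

Lemma decomp_big_eq (W : nmodType) (F : int -> V -> W) x s f t g :
  (forall n, F n 0 = 0) -> is_decomp P x s f -> is_decomp P x t g ->
  \sum_(n <- s) F n (f n) = \sum_(n <- t) F n (g n).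
Proof.
move=> F0 Dxf Dxg; have [[uu _ _ _] _] := decomp_cover Dxf Dxg.
have [us _ f0 _] := Dxf; have [ut _ g0 _] := Dxg.
rewrite -(big_support (t := undup (s ++ t)) us uu); last 2 first.
- by move=> k ks; rewrite mem_undup mem_cat ks.
- by move=> n /f0 ->.
rewrite -(big_support (t := undup (s ++ t)) ut uu); last 2 first.
- by move=> k kt; rewrite mem_undup mem_cat kt orbT.
- by move=> n /g0 ->.
by apply: eq_bigr => n _; rewrite (decomp_unique Dxf Dxg).
Qed.

Lemma decomp_mem (Q : V -> Prop) : Q 0 -> (forall x y, Q x -> Q y -> Q (x + y)) ->
  (forall x, Q x ->
     exists s f, (forall n, P n (f n) /\ Q (f n)) /\ x = \sum_(n <- s) f n) ->
  forall x s f, Q x -> is_decomp P x s f -> forall n, Q (f n).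
Proof.
move=> Q0 QD Qgr x s f /Qgr [t [g [PQg ->]]] Df n.
have [|u [h [uu PQh h0 E]]] := decomp_collect Q0 QD (l := [seq (k, g k) | k <- t]).
  by move=> p /mapP [k _ ->]; apply: PQg.
have Dh : is_decomp P (\sum_(k <- t) g k) u h.
  by split=> // [k|]; [case: (PQh k) | rewrite -E big_map].
by rewrite (decomp_unique Df Dh); case: (PQh n).
Qed.

Definition decomp_pick x : seq int * (int -> V) :=
  epsilon (inhabits ([::], fun=> 0)) (fun p => is_decomp P x p.1 p.2).

Lemma decomp_pickP x : is_decomp P x (decomp_pick x).1 (decomp_pick x).2.
Proof.
have [s [f Dx]] := decomp_exists x.
exact: (epsilon_spec _ (fun p => is_decomp P x p.1 p.2) (ex_intro _ (s, f) Dx)).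
Qed.

Definition parity x : V := \sum_(n <- (decomp_pick x).1) ksignv n ((decomp_pick x).2 n).

Lemma parityE x s f : is_decomp P x s f -> parity x = \sum_(n <- s) ksignv n (f n).
Proof. exact: decomp_big_eq (@ksignv0 V) (decomp_pickP x). Qed.

Lemma parityD x y : parity (x + y) = parity x + parity y.
Proof.
have [Dx Dy] := decomp_cover (decomp_pickP x) (decomp_pickP y).
rewrite (parityE (decompD Dx Dy)) (parityE Dx) (parityE Dy) -big_split.
by apply: eq_bigr => n _; rewrite ksignvD.
Qed.

Lemma parity0 : parity 0 = 0.
Proof. by apply: (addrI (parity 0)); rewrite -parityD !addr0. Qed.

Lemma parityN x : parity (- x) = - parity x.
Proof. by apply: (addrI (parity x)); rewrite -parityD !subrr parity0. Qed.

Lemma parity_sum (I : Type) (r : seq I) (F : I -> V) :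
  parity (\sum_(i <- r) F i) = \sum_(i <- r) parity (F i).
Proof. exact: (big_morph parity parityD parity0). Qed.

Lemma parity_hom n x : P n x -> parity x = ksignv n x.
Proof.
move=> Px; have Dx : is_decomp P x [:: n] (fun k => if k == n then x else 0).
  split=> // [k|k|]; [by case: eqP => [->|]|by rewrite inE => /negbTE ->|].
  by rewrite big_seq1 eqxx.
by rewrite (parityE Dx) big_seq1 eqxx.
Qed.

Lemma parity_gr n x : P n x -> P n (parity x).
Proof.
by move=> Px; rewrite (parity_hom Px) /ksignv; case: (odd _) => //; apply: PN.
Qed.

Lemma parityK : involutive parity.
Proof.
move=> x; have [us Pf f0 Ex] := decomp_pickP x.
set s := (decomp_pick x).1; set f := (decomp_pick x).2 in Pf f0 Ex *.
have Dpx : is_decomp P (parity x) s (fun n => ksignv n (f n)).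
  split=> // [n|n /f0 ->]; last by rewrite ksignv0.
  by rewrite -(parity_hom (Pf n)); apply: parity_gr.
by rewrite (parityE Dpx) [RHS]Ex; apply: eq_bigr => n _; rewrite ksignvK.
Qed.

End Decompositions.

Lemma graded_decomposition_shift (V : zmodType) (P : int -> V -> Prop) (k : int) :
  graded_decomposition P -> graded_decomposition (fun n => P (n - k)).
Proof.
move=> [P0 [PD [PN [Pex Puniq]]]]; split=> //; split=> [n|]; first exact: PD.
split=> [n|]; first exact: PN.
split=> [x|s F us PF sum0 n ns].
  have [s [f [Pf ->]]] := Pex x.
  exists [seq n + k | n <- s], (fun m => f (m - k)); split=> [n|]; first exact: Pf.
  by rewrite big_map; under eq_bigr do rewrite addrK.
rewrite -(subrK k n); apply: (Puniq [seq m - k | m <- s] (fun m => F (m + k))).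
- by rewrite map_inj_uniq // => a b /addIr.
- by move=> m; have := PF (m + k); rewrite addrK.
- by rewrite big_map; under eq_bigr do rewrite subrK.
- exact: map_f.
Qed.

Lemma graded_decomposition_pair (V W : zmodType) (P : int -> V -> Prop)
    (Q : int -> W -> Prop) :
  graded_decomposition P -> graded_decomposition Q ->
  graded_decomposition (fun n (p : V * W) => P n p.1 /\ Q n p.2).
Proof.
move=> HP HQ; have [P0 [PD [PN [_ Puniq]]]] := HP; have [Q0 [QD [QN [_ Quniq]]]] := HQ.
split=> [n|]; first by split.
split=> [n x y [Px Qx] [Py Qy]|]; first by split; [apply: PD | apply: QD].
split=> [n x [Px Qx]|]; first by split; [apply: PN | apply: QN].
split=> [[x y]|s F us PF sum0 n ns].
  have [s [f Dx]] := decomp_exists HP x; have [t [g Dy]] := decomp_exists HQ y.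
  have [[_ Pf _ ->] [_ Qg _ ->]] := decomp_cover Dx Dy.
  exists (undup (s ++ t)), (fun n => (f n, g n)); split=> //.
  by apply: injective_projections; rewrite /= raddf_sum.
have sum0_1 : \sum_(m <- s) (F m).1 = 0 by rewrite -raddf_sum sum0.
have sum0_2 : \sum_(m <- s) (F m).2 = 0 by rewrite -raddf_sum sum0.
rewrite [F n]surjective_pairing (Puniq s _ us _ sum0_1) ?(Quniq s _ us _ sum0_2) //.
  by move=> m; case: (PF m).
by move=> m; case: (PF m).
Qed.

(** * Quotient modules *)

Record lsubmodule (A : pzRingType) (N : lmodType A) (P : N -> Prop) : Prop :=
  LSubmodule {
    lsub0 : P 0;
    lsubD : forall x y, P x -> P y -> P (x + y);
    lsubZ : forall a x, P x -> P (a *: x) }.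

Section QuotientModule.
Variables (A : pzRingType) (N : lmodType A) (P : N -> Prop).
Hypothesis HP : lsubmodule P.

Lemma lsubN x : P x -> P (- x).
Proof. by rewrite -scaleN1r; apply: lsubZ. Qed.

Lemma lsubB x y : P x -> P y -> P (x - y).
Proof. by move=> Px Py; have := lsubD HP Px (lsubN Py). Qed.

Definition coset_rep (x : N) : N := epsilon (inhabits 0) (fun y => P (x - y)).

Lemma coset_repP x : P (x - coset_rep x).
Proof.
apply: (epsilon_spec (inhabits 0) (fun y => P (x - y))).
by exists x; rewrite subrr; apply: lsub0.
Qed.

Lemma coset_rep_eq x y : P (x - y) -> coset_rep x = coset_rep y.
Proof.
move=> Pxy; rewrite /coset_rep; congr epsilon; apply: functional_extensionality => z.
apply: propositional_extensionality; split=> Pz.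
  by have := lsubB Pz Pxy; rewrite opprB addrC addrA subrK.
by have := lsubD HP Pxy Pz; rewrite addrA subrK.
Qed.

Lemma coset_repK x : coset_rep (coset_rep x) = coset_rep x.
Proof. by apply: coset_rep_eq; rewrite -opprB; apply: lsubN; apply: coset_repP. Qed.

(* The dummy argument lets canonical structure inference recover [HP] from
   the type. *)
Definition quotmod (_ : lsubmodule P) : Type := {x : N | coset_rep x == x}.
HB.instance Definition _ := Choice.on (quotmod HP).

Definition qpi (x : N) : quotmod HP :=
  exist _ (coset_rep x) (introT eqP (coset_repK x)).

Lemma qpi_eq x y : qpi x = qpi y <-> P (x - y).
Proof.
split=> [/(congr1 val) /= Exy|Pxy].
  by have := lsubB (coset_repP x) (coset_repP y); rewrite Exy opprB addrA subrK.
by apply: val_inj; rewrite /= (coset_rep_eq Pxy).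
Qed.

Lemma qpiK (q : quotmod HP) : qpi (val q) = q.
Proof. by case: q => x Hx; apply: val_inj => /=; apply/eqP. Qed.

Lemma qpi_valP x : P (val (qpi x) - x).
Proof. by rewrite -opprB; apply: lsubN; apply: coset_repP. Qed.

Lemma quotmod_ind (Pr : quotmod HP -> Prop) : (forall x, Pr (qpi x)) -> forall q, Pr q.
Proof. by move=> Pr_qpi q; rewrite -(qpiK q). Qed.

Definition quot_add (q1 q2 : quotmod HP) := qpi (val q1 + val q2).
Definition quot_opp (q : quotmod HP) := qpi (- val q).
Definition quot_scale (a : A) (q : quotmod HP) := qpi (a *: val q).

Lemma quot_addE x y : quot_add (qpi x) (qpi y) = qpi (x + y).
Proof.
by apply/qpi_eq; have := lsubD HP (qpi_valP x) (qpi_valP y); rewrite opprD addrACA.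
Qed.

Lemma quot_oppE x : quot_opp (qpi x) = qpi (- x).
Proof. by apply/qpi_eq; have := lsubN (qpi_valP x); rewrite opprB addrC opprK. Qed.

Lemma quot_scaleE a x : quot_scale a (qpi x) = qpi (a *: x).
Proof. by apply/qpi_eq; have := lsubZ HP a (qpi_valP x); rewrite scalerBr. Qed.

Lemma quot_addA : associative quot_add.
Proof.
elim/quotmod_ind=> x; elim/quotmod_ind=> y; elim/quotmod_ind=> z.
by rewrite !quot_addE addrA.
Qed.

Lemma quot_addC : commutative quot_add.
Proof. by elim/quotmod_ind=> x; elim/quotmod_ind=> y; rewrite !quot_addE addrC. Qed.

Lemma quot_add0 : left_id (qpi 0) quot_add.
Proof. by elim/quotmod_ind=> x; rewrite quot_addE add0r. Qed.

Lemma quot_addN : left_inverse (qpi 0) quot_opp quot_add.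
Proof. by elim/quotmod_ind=> x; rewrite quot_oppE quot_addE addNr. Qed.

HB.instance Definition _ :=
  GRing.isZmodule.Build (quotmod HP) quot_addA quot_addC quot_add0 quot_addN.

Lemma qpiD x y : qpi (x + y) = qpi x + qpi y.
Proof. by rewrite -quot_addE. Qed.

Lemma quot_scaleA a b q : quot_scale a (quot_scale b q) = quot_scale (a * b) q.
Proof. by elim/quotmod_ind: q => x; rewrite !quot_scaleE scalerA. Qed.

Lemma quot_scale1 : left_id 1 quot_scale.
Proof. by elim/quotmod_ind=> x; rewrite quot_scaleE scale1r. Qed.

Lemma quot_scaleDr : right_distributive quot_scale +%R.
Proof.
move=> a; elim/quotmod_ind=> x; elim/quotmod_ind=> y.
by rewrite -qpiD !quot_scaleE scalerDr qpiD.
Qed.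

Lemma quot_scaleDl q : {morph quot_scale^~ q : a b / a + b}.
Proof. by elim/quotmod_ind: q => x a b /=; rewrite !quot_scaleE scalerDl qpiD. Qed.

HB.instance Definition _ := GRing.Zmodule_isLmodule.Build A (quotmod HP)
  quot_scaleA quot_scale1 quot_scaleDr quot_scaleDl.

Lemma qpiZ a x : qpi (a *: x) = a *: qpi x.
Proof. by rewrite -quot_scaleE. Qed.

Lemma qpi0 : qpi 0 = 0.
Proof. by []. Qed.

Lemma qpiN x : qpi (- x) = - qpi x.
Proof. by rewrite -scaleN1r qpiZ scaleN1r. Qed.

Lemma qpi_sum (I : Type) (r : seq I) (F : I -> N) :
  qpi (\sum_(i <- r) F i) = \sum_(i <- r) qpi (F i).
Proof. exact: (big_morph _ qpiD qpi0). Qed.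

Lemma qpi_eq0 x : qpi x = 0 <-> P x.
Proof. by rewrite -qpi0 qpi_eq subr0. Qed.

End QuotientModule.

(** * Dg-modules and the cone *)

Section DGModule.
Variables (R : comPzRingType) (A : algType R) (gr : int -> A -> Prop) (d : A -> A).
Variables (N : lmodType A) (grN : int -> N -> Prop) (dl : N -> N).
Hypothesis HN : is_dg_module gr d grN dl.

Lemma dg_graded : graded_decomposition grN.
Proof. by case: HN. Qed.

Lemma dg_scalar_gr n (r : R) m : grN n m -> grN n ((r%:A : A) *: m).
Proof. by case: HN => _ [+ _]; apply. Qed.

Lemma dg_act_gr i j (a : A) m : gr i a -> grN j m -> grN (i + j) (a *: m).
Proof. by case: HN => _ [_ [+ _]]; apply. Qed.

Lemma dg_diffD x y : dl (x + y) = dl x + dl y.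
Proof. by case: HN => _ [_ [_ [+ _]]]; apply. Qed.

Lemma dg_diff_gr n m : grN n m -> grN (n + 1) (dl m).
Proof. by case: HN => _ [_ [_ [_ [+ _]]]]; apply. Qed.

Lemma dg_diffK m : dl (dl m) = 0.
Proof. by case: HN => _ [_ [_ [_ [_ [+ _]]]]]; apply. Qed.

Lemma dg_diff_leibniz n (a : A) m : gr n a ->
  dl (a *: m) = d a *: m + ksign A n *: (a *: dl m).
Proof. by case: HN => _ [_ [_ [_ [_ [_ +]]]]]; apply. Qed.

Lemma dg_diff0 : dl 0 = 0.
Proof. by apply: (addrI (dl 0)); rewrite -dg_diffD !addr0. Qed.

Lemma dg_diffN x : dl (- x) = - dl x.
Proof. by apply: (addrI (dl x)); rewrite -dg_diffD !subrr dg_diff0. Qed.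

Lemma dg_diffB x y : dl (x - y) = dl x - dl y.
Proof. by rewrite dg_diffD dg_diffN. Qed.

Lemma dg_diff_sum (I : Type) (r : seq I) (F : I -> N) :
  dl (\sum_(i <- r) F i) = \sum_(i <- r) dl (F i).
Proof. exact: (big_morph dl dg_diffD dg_diff0). Qed.

Local Notation parity := (parity grN).

Lemma parity_diff x : parity (dl x) = - dl (parity x).
Proof.
have Dx := decomp_pickP dg_graded x; have [_ Pf _ Ex] := Dx.
rewrite {1}Ex dg_diff_sum (parity_sum dg_graded) (parityE dg_graded Dx).
rewrite dg_diff_sum -sumrN.
apply: eq_bigr => n _; rewrite (parity_hom dg_graded (dg_diff_gr (Pf n))) ksignvS.
by rewrite /ksignv; case: (odd _); rewrite ?dg_diffN.
Qed.

Lemma parity_act i (a : A) x : gr i a -> parity (a *: x) = ksign A i *: (a *: parity x).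
Proof.
move=> Ha; have Dx := decomp_pickP dg_graded x; have [_ Pf _ Ex] := Dx.
rewrite {1}Ex scaler_sumr (parity_sum dg_graded) (parityE dg_graded Dx) !scaler_sumr.
apply: eq_bigr => n _; rewrite (parity_hom dg_graded (dg_act_gr Ha (Pf n))) ksignv_add.
by rewrite ksignE; congr ksignv; rewrite /ksignv; case: (odd _); rewrite ?scalerN.
Qed.

Lemma dg_shift : is_dg_module gr d (fun n => grN (n - 1)) dl.
Proof.
split; first exact: graded_decomposition_shift dg_graded.
split=> [n r m|]; first exact: dg_scalar_gr.
split=> [i j a m Ha Hm|]; first by rewrite -addrA; apply: dg_act_gr.
split; first exact: dg_diffD.
split=> [n m /dg_diff_gr|]; first by rewrite subrK addrK.
by split; [exact: dg_diffK | exact: dg_diff_leibniz].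
Qed.

Definition cone_gr n (p : N * N) := grN n p.1 /\ grN (n - 1) p.2.

(* The cone of the identity of N; the parity twist makes it a dg-module
   without twisting the action on the shifted summand. *)
Definition cone_diff (p : N * N) : N * N := (dl p.1, parity p.1 + dl p.2).

Lemma dg_cone : is_dg_module gr d cone_gr cone_diff.
Proof.
split.
  exact: graded_decomposition_pair dg_graded (graded_decomposition_shift 1 dg_graded).
split=> [n r [x y] [Hx Hy]|]; first by split; apply: dg_scalar_gr.
split=> [i j a [x y] Ha [Hx Hy]|].
  by split; [apply: dg_act_gr | rewrite /= -addrA; apply: dg_act_gr].
split=> [[x1 y1] [x2 y2]|].
  by rewrite /cone_diff /= dg_diffD (parityD dg_graded) dg_diffD addrACA.
split=> [n [x y] [/= Hx Hy]|].
  split; first exact: dg_diff_gr.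
  rewrite /= addrK; case: dg_graded => _ [PD _]; apply: PD.
    exact: (parity_gr dg_graded Hx).
  by have := dg_diff_gr Hy; rewrite subrK.
split=> [[x y]|n a [x y] Ha].
  by rewrite /cone_diff /= dg_diffK dg_diffD parity_diff dg_diffK addr0 addNr.
rewrite /cone_diff /= (dg_diff_leibniz _ Ha) (parity_act _ Ha) (dg_diff_leibniz y Ha).
by apply: injective_projections; rewrite /= ?scalerDr // addrCA.
Qed.

Lemma acyclic_of_cone_section (s : N -> N * N) :
  (forall x, cone_diff (s x) = s (dl x)) -> s 0 = 0 -> (forall x, (s x).1 = x) ->
  acyclic dl.
Proof.
move=> s_diff s0 s_fst z _ dz; exists (parity (s z).2); split=> //.
move: (s_fst z) (s_diff z); rewrite dz s0; case: (s z) => _ y /= ->.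
move=> [_ /eqP]; rewrite addr_eq0 => /eqP /(congr1 parity).
by rewrite (parityK dg_graded) (parityN dg_graded) parity_diff opprK.
Qed.

Lemma dg_module_acyclic (J : A -> Prop) : quotient_dg_semisimple gr d J ->
  (forall x, J x -> forall m : N, x *: m = 0) -> acyclic dl.
Proof.
move=> Hss HJ.
have HJcone x (Jx : J x) (m : N * N) : x *: m = 0.
  by apply: injective_projections; rewrite /= HJ.
have incl_mor :
    is_dg_morphism gr d (fun n => grN (n - 1)) dl cone_gr cone_diff (fun y => (0, y)).
  split=> [x y|]; first by rewrite -{1}[0]addr0.
  split=> [a x|]; first by rewrite -[0 in LHS](scaler0 _ a).
  split=> [n x Hx|x]; first by split=> //; case: dg_graded.
  by rewrite /cone_diff /= dg_diff0 (parity0 dg_graded) add0r.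
have fst_mor : is_dg_morphism gr d cone_gr cone_diff grN dl fst.
  by split=> //; split=> //; split=> [n x []|].
have incl_inj : injective (fun y : N => (0 : N, y)) by move=> x y [].
have fst_surj (z : N) : exists p : N * N, p.1 = z by exists (z, 0).
have cone_exact (p : N * N) : p.1 = 0 <-> exists x, p = (0, x).
  by case: p => x y; split=> [/= ->|[z /pair_equal_spec [-> _]]]; [exists y|].
have [s [[sD [_ [_ s_diff]]] s_fst]] := Hss _ _ _ _ _ _ _ _ _ _ _
  dg_shift dg_cone HN HJ HJcone HJ incl_mor fst_mor incl_inj fst_surj cone_exact.
apply: (acyclic_of_cone_section (s := s)) s_fst => [x|]; first by rewrite s_diff.
by apply: (addrI (s 0)); rewrite -sD !addr0.
Qed.

End DGModule.

(** * Quotient dg-modules *)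

Lemma dg_submodule_lsubmodule (R : comPzRingType) (A : algType R) (N : lmodType A)
    (grN : int -> N -> Prop) (dl : N -> N) (P : N -> Prop) :
  is_dg_submodule grN dl P -> lsubmodule P.
Proof. by case=> P0 [PD [PZ _]]; split. Qed.

Section QuotientDGModule.
Variables (R : comPzRingType) (A : algType R) (gr : int -> A -> Prop) (d : A -> A).
Variables (N : lmodType A) (grN : int -> N -> Prop) (dl : N -> N).
Hypothesis HN : is_dg_module gr d grN dl.
Variable P : N -> Prop.
Hypothesis HPdg : is_dg_submodule grN dl P.

Let HP := dg_submodule_lsubmodule HPdg.
Local Notation qpi := (qpi HP).

Lemma dg_submodule_gr x : P x ->
  exists s f, (forall n, grN n (f n) /\ P (f n)) /\ x = \sum_(n <- s) f n.
Proof. by case: HPdg => _ [_ [_ [+ _]]]; apply. Qed.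

Lemma dg_submodule_diff x : P x -> P (dl x).
Proof. by case: HPdg => _ [_ [_ [_ +]]]; apply. Qed.

Definition quot_gr n (q : quotmod HP) := exists x, grN n x /\ q = qpi x.
Definition quot_diff (q : quotmod HP) := qpi (dl (val q)).

Lemma quot_diffE x : quot_diff (qpi x) = qpi (dl x).
Proof.
by apply/qpi_eq; rewrite -(dg_diffB HN); apply: dg_submodule_diff; apply: qpi_valP.
Qed.

Lemma quot_gr_lift (F : int -> quotmod HP) : (forall n, quot_gr n (F n)) ->
  exists G : int -> N, forall n, grN n (G n) /\ F n = qpi (G n).
Proof. exact: ClassicalEpsilon.choice. Qed.

Lemma graded_decomposition_quot : graded_decomposition quot_gr.
Proof.
have [P0 [PD [PN [Pex _]]]] := dg_graded HN.
split=> [n|]; first by exists 0.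
split=> [n _ _ [x [Hx ->]] [y [Hy ->]]|].
  by exists (x + y); rewrite qpiD; split=> //; apply: PD.
split=> [n _ [x [Hx ->]]|]; first by exists (- x); rewrite qpiN; split=> //; apply: PN.
split=> [q|s F us /quot_gr_lift [G HG] sum0 n ns].
  have [s [f [Pf Ex]]] := Pex (val q).
  exists s, (fun n => qpi (f n)); split=> [n|]; first by exists (f n).
  by rewrite -qpi_sum -Ex qpiK.
have DG : is_decomp grN (\sum_(k <- s) G k) s (fun k => if k \in s then G k else 0).
  split=> // [k|k /negbTE ->|] //; first by case: ifP => _; [case: (HG k) | apply: P0].
  by rewrite big_seq_cond [RHS]big_seq_cond; apply: eq_bigr => k /andP [->].
have PG : P (\sum_(k <- s) G k).
  apply/(qpi_eq0 HP); rewrite (qpi_sum HP) -[RHS]sum0.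
  by apply: eq_bigr => k _; case: (HG k).
have := decomp_mem (dg_graded HN) (lsub0 HP) (lsubD HP) dg_submodule_gr PG DG n.
by rewrite ns => /(qpi_eq0 HP) <-; case: (HG n).
Qed.

Lemma dg_quot : is_dg_module gr d quot_gr quot_diff.
Proof.
split; first exact: graded_decomposition_quot.
split=> [n r _ [x [Hx ->]]|].
  by exists (r%:A *: x); rewrite qpiZ; split=> //; apply: (dg_scalar_gr HN).
split=> [i j a _ Ha [x [Hx ->]]|].
  by exists (a *: x); rewrite qpiZ; split=> //; apply: (dg_act_gr HN).
split=> [|].
  elim/quotmod_ind=> x; elim/quotmod_ind=> y.
  by rewrite -qpiD !quot_diffE (dg_diffD HN) qpiD.
split=> [n _ [x [Hx ->]]|].
  by rewrite quot_diffE; exists (dl x); split=> //; apply: (dg_diff_gr HN).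
split=> [|n a]; first by elim/quotmod_ind=> x; rewrite !quot_diffE (dg_diffK HN).
elim/quotmod_ind=> x Ha.
by rewrite -qpiZ !quot_diffE (dg_diff_leibniz HN _ Ha) qpiD !qpiZ.
Qed.

Lemma dg_submodule_preimage (Q : quotmod HP -> Prop) :
  is_dg_submodule quot_gr quot_diff Q -> is_dg_submodule grN dl (fun x => Q (qpi x)).
Proof.
move=> [Q0 [QD [QZ [Qgr Qdiff]]]].
have Q'0 : Q (qpi 0) by rewrite qpi0.
have Q'D x y : Q (qpi x) -> Q (qpi y) -> Q (qpi (x + y)) by rewrite qpiD; apply: QD.
have P_Q x : P x -> Q (qpi x) by move/(qpi_eq0 HP) ->.
split=> //; split=> //; split=> [a x|]; first by rewrite qpiZ; apply: QZ.
split=> [x|x]; last by rewrite -quot_diffE; apply: Qdiff.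
move=> /Qgr [s [F [HF Ex]]].
have [G HG] := quot_gr_lift (fun n => (HF n).1).
have PxG : P (x - \sum_(k <- s) G k).
  apply/(qpi_eq0 HP); rewrite qpiD qpiN (qpi_sum HP) Ex -sumrB big1 // => k _.
  by case: (HG k) => _ ->; rewrite subrr.
have [t [H [PH EH]]] := dg_submodule_gr PxG.
have [|u [h [_ PQh _ E]]] := decomp_collect (dg_graded HN) Q'0 Q'D
    (l := [seq (k, G k) | k <- s] ++ [seq (k, H k) | k <- t]).
  move=> p; rewrite mem_cat => /orP [] /mapP [k _ ->] /=.
    by case: (HG k) => Gk <-; split=> //; case: (HF k).
  by case: (PH k) => Hk /P_Q.
by exists u, h; split=> //; rewrite -E big_cat !big_map /= -EH addrC subrK.
Qed.

Lemma dg_submodule_rel_acyclic (J : A -> Prop) : quotient_dg_semisimple gr d J ->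
  (forall j, J j -> forall x, P (j *: x)) ->
  forall x, P (dl x) -> exists y, P (x - dl y).
Proof.
move=> Hss JP x Pdx.
have J_quot j (Jj : J j) (q : quotmod HP) : j *: q = 0.
  by elim/quotmod_ind: q => y; rewrite -qpiZ; apply/(qpi_eq0 HP)/JP.
have [|q [_ Eq]] := dg_module_acyclic dg_quot Hss J_quot (x := qpi x) I.
  by rewrite quot_diffE; apply/(qpi_eq0 HP).
by exists (val q); apply/(qpi_eq HP); rewrite Eq -quot_diffE qpiK.
Qed.

Lemma dg_submodule_homology_iso (J : A -> Prop) : quotient_dg_semisimple gr d J ->
  (forall j, J j -> forall x, P (j *: x)) ->
  (forall m, P m -> dl m = 0 -> (exists a, m = dl a) -> exists m', P m' /\ m = dl m') /\
  (forall a, dl a = 0 -> exists m, P m /\ dl m = 0 /\ exists b, a - m = dl b).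
Proof.
move=> Hss JP; have rel := dg_submodule_rel_acyclic Hss JP.
split=> [m Pm _ [a Em]|a da].
  rewrite Em in Pm *; have [y Pay] := rel a Pm.
  by exists (a - dl y); rewrite (dg_diffB HN) (dg_diffK HN) subr0.
have [|y Pay] := rel a; first by rewrite da; case: HPdg.
exists (a - dl y); rewrite (dg_diffB HN) da (dg_diffK HN) subrr.
by split=> //; split=> //; exists y; rewrite opprB addrC subrK.
Qed.

Lemma dg_submodule_acyclic_lift (J : A -> Prop) : quotient_dg_semisimple gr d J ->
  (forall j, J j -> forall x, P (j *: x)) -> acyclic_on P dl -> acyclic dl.
Proof.
move=> Hss JP P_acyclic x _ dx.
have [|y Pxy] := dg_submodule_rel_acyclic Hss JP (x := x).
  by rewrite dx; case: HPdg.
have [|z [_ E]] := P_acyclic _ Pxy.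
  by rewrite (dg_diffB HN) dx (dg_diffK HN) subrr.
by exists (y + z); split=> //; rewrite (dg_diffD HN) -E addrC subrK.
Qed.

End QuotientDGModule.

(** * The dg-radical *)

Section DGAlgebra.
Variables (R : comPzRingType) (A : algType R) (gr : int -> A -> Prop) (d : A -> A).
Hypothesis HA : is_dg_algebra gr d.

Local Notation J := (dgrad2 gr d).

Lemma dg_regular : @is_dg_module R A gr d A^o gr d.
Proof.
have [HG [Hsc [_ [Hmul [dD [_ [Hdeg [dK Hleib]]]]]]]] := HA.
split=> //; split=> [n r m Hm|]; first by rewrite [_ *: _]mulr_algl; apply: Hsc.
split=> //; split=> //; split=> //; split=> // n a m Ha.
change (d (a * m) = d a * m + ksign A n * (a * d m)).
by rewrite (Hleib _ _ _ Ha) mulrA.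
Qed.

Lemma dgrad2_mull a x : J x -> J (a * x).
Proof. by move=> Jx S grS dl HS Hs s; rewrite -scalerA (Jx _ _ _ HS Hs) scaler0. Qed.

Lemma dgrad2_mulr a x : J x -> J (x * a).
Proof. by move=> Jx S grS dl HS Hs s; rewrite -scalerA (Jx _ _ _ HS Hs). Qed.

Lemma dgrad2_decomp j s f : J j -> is_decomp gr j s f -> forall n, J (f n).
Proof.
move=> Jj [us Pf f0 Ej] n S grS dl HS Hs v.
have [_ [_ [_ [Sex Suniq]]]] := dg_graded HS.
have [t [g [Pg ->]]] := Sex v; rewrite scaler_sumr big1 // => m _.
have [ns|/f0 ->] := boolP (n \in s); last by rewrite scale0r.
rewrite -(addrK m n); apply: (Suniq [seq k + m | k <- s] (fun k => f (k - m) *: g m)).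
- by rewrite map_inj_uniq // => a b /addIr.
- by move=> k; have := dg_act_gr HS (Pf (k - m)) (Pg m); rewrite subrK.
- rewrite big_map; under eq_bigr do rewrite addrK.
  by rewrite -scaler_suml -Ej (Jj _ _ _ HS Hs).
- exact: map_f.
Qed.

Lemma dgrad2_diff_hom n h : gr n h -> J h -> J (d h).
Proof.
move=> Hh Jh S grS dl HS Hs v.
have := dg_diff_leibniz HS v Hh; rewrite !(Jh _ _ _ HS Hs) scaler0 addr0 (dg_diff0 HS).
by move<-.
Qed.

Lemma dgrad2_left_dg_ideal : is_left_dg_ideal gr d J.
Proof.
have HR := dg_regular.
have J0 : J 0 by move=> S grS dl _ _ s; rewrite scale0r.
have JD x y : J x -> J y -> J (x + y).
  move=> Jx Jy S grS dl HS Hs s.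
  by rewrite scalerDl (Jx _ _ _ HS Hs) (Jy _ _ _ HS Hs) addr0.
split=> //; split=> //; split=> [a x|]; first exact: dgrad2_mull.
split=> [x Jx|x Jx]; have [s [f Dx]] := decomp_exists (dg_graded HR) x.
  exists s, f; have [_ Pf _ Ex] := Dx; split=> // n; split=> //.
  exact: dgrad2_decomp Jx Dx n.
have [_ Pf _ ->] := Dx; rewrite (dg_diff_sum HR).
apply: (big_ind J) => // n _; apply: (dgrad2_diff_hom (Pf n)).
exact: dgrad2_decomp Jx Dx n.
Qed.

Section DGMaximal.
Variable M : A -> Prop.
Hypothesis HM : is_dg_maximal gr d M.

Let HMdg : @is_dg_submodule R A A^o gr d M := proj1 HM.
Let HMsub := dg_submodule_lsubmodule HMdg.

Lemma dg_maximal_quot_simple :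
  dg_simple (quot_gr (HPdg := HMdg)) (quot_diff (HPdg := HMdg)).
Proof.
have [_ [[a0 Ma0] Mmax]] := HM.
split=> [|Q HQ]; first by exists (qpi HMsub a0) => /(qpi_eq0 HMsub).
have HQ' := dg_submodule_preimage dg_regular HQ.
have M_Q a : M a -> Q (qpi HMsub a) by move/(qpi_eq0 HMsub) ->; case: HQ.
have [[a Qa]|Q_full] := classic (exists a, ~ Q (qpi HMsub a)).
  left=> q; elim/quotmod_ind: q => x Qx; apply/(qpi_eq0 HMsub).
  exact: Mmax _ HQ' (ex_intro _ a Qa) M_Q _ Qx.
right=> q; elim/quotmod_ind: q => x; apply: NNPP => Qx.
by apply: Q_full; exists x.
Qed.

Lemma dgrad2_sub_dg_maximal j : J j -> M j.
Proof.
move=> Jj.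
have := Jj _ _ _ (dg_quot dg_regular HMdg) dg_maximal_quot_simple (qpi HMsub 1).
by rewrite -qpiZ => /(qpi_eq0 HMsub); rewrite [_ *: _]mulr1.
Qed.

End DGMaximal.

End DGAlgebra.

Unset Implicit Arguments.
Set Strict Implicit.

Theorem proposition3p8 (R : comPzRingType) (A : algType R)
    (gr : int -> A -> Prop) (d : A -> A) :
  is_dg_algebra gr d ->
  left_dg_semiprimary gr d ->
  (* (1) every dg-simple left dg-module is acyclic *)
  (forall (S : lmodType A) (grS : int -> S -> Prop) (delta : S -> S),
      is_dg_module gr d grS delta -> dg_simple grS delta -> acyclic delta) /\
  (* (2) for a dg-maximal left dg-ideal M, H(M,d) -> H(A,d) is an iso *)
  (forall M : A -> Prop, is_dg_maximal gr d M ->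
      (* injectivity *)
      (forall m, M m -> d m = 0 -> (exists a, m = d a) ->
         exists m', M m' /\ m = d m') /\
      (* surjectivity *)
      (forall a, d a = 0 -> exists m, M m /\ d m = 0 /\ exists b, a - m = d b)) /\
  (* (3) *)
  (acyclic_on (dgrad2 gr d) d -> acyclic d).
Proof.
move=> HA [Hss _]; have HR := dg_regular HA.
split=> [S grS delta HS Hs|].
  exact: (dg_module_acyclic HS Hss (fun x Jx => Jx _ _ _ HS Hs)).
split=> [M HM|].
  apply: (dg_submodule_homology_iso HR (proj1 HM) Hss) => j Jj x.
  exact: (dgrad2_sub_dg_maximal HA HM (dgrad2_mulr x Jj)).
apply: (dg_submodule_acyclic_lift HR (dgrad2_left_dg_ideal HA) Hss) => j Jj x.
exact: dgrad2_mulr.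
Qed.
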